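(* Let $M$ and $M'$ be two stable matchings in an instance $I$ of SPA-S. If some student $s_i$ is assigned in $M$ and in $M'$ to different projects that are offered by the same lecturer $l_k$, and $s_i$ prefers $M$ to $M'$, then there exists a student $s_r\in M'(l_k)\setminus M(l_k)$ such that $l_k$ prefers $s_r$ to $s_i$. In particular $M(l_k)\neq M'(l_k)$.
   Context: An instance $I$ of SPA-S consists of a finite set $\mathcal{S}$ of students, a finite set $\mathcal{P}$ of projects and a finite set $\mathcal{L}$ of lecturers. Each student $s_i$ ranks a subset $A_i\subseteq\mathcal{P}$ (its acceptable projects) in strict order. Each project is offered by exactly one lecturer; lecturer $l_k$ offers a nonempty set $P_k\subseteq\mathcal{P}$, the $P_k$ partitioning $\mathcal{P}$. Each lecturer $l_k$ ranks in strict order the students who find at least one project of $P_k$ acceptable. Projects have capacities $c_j\in\mathbb{Z}^+$, lecturers have capacities $d_k\in\mathbb{Z}^+$ with $\max\{c_j:p_j\in P_k\}\le d_k\le\sum\{c_j:p_j\in P_k\}$. A pair $(s_i,p_j)$, $p_j$ offered by $l_k$, is acceptable if $p_j\in A_i$ and $s_i$ is on $l_k$'s list. A matching $M$ is a set of acceptable pairs with each student in at most one pair, $|M(p_j)|\le c_j$, $|M(l_k)|\le d_k$, where $M(s_i)$, $M(p_j)$, $M(l_k)$ denote the project of $s_i$, the students assigned to $p_j$, and the students assigned to projects of $l_k$. Undersubscribed/full means fewer than/exactly capacity many assigned students. An acceptable pair $(s_i,p_j)\notin M$ ($p_j$ offered by $l_k$) blocks $M$ if ($s_i$ is unassigned or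 prefers $p_j$ to $M(s_i)$) and one of: (P1) $p_j$ and $l_k$ undersubscribed; (P2) $p_j$ undersubscribed, $l_k$ full, $s_i\in M(l_k)$; (P3) $p_j$ undersubscribed, $l_k$ full, $l_k$ prefers $s_i$ to the worst student of $M(l_k)$; (P4) $p_j$ full and $l_k$ prefers $s_i$ to the worst student of $M(p_j)$. $M$ is stable if it has no blocking pair. A student $s$ prefers $M$ to $M'$ if $s$ is assigned in both and prefers $M(s)$ to $M'(s)$. *)

From mathcomp Require Import all_boot.
Set Implicit Arguments. Unset Strict Implicit. Unset Printing Implicit Defensive.

(* An SPA-S instance over finite types of students, projects, lecturers.
   Strict preference lists are encoded by injective ranks (smaller rank =
   more preferred) on the acceptable elements. *)
Record SPAS (Student Project Lecturer : finType) := {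
  offer : Project -> Lecturer;
  acc : Student -> {set Project};
  srank : Student -> Project -> nat;
  lrank : Lecturer -> Student -> nat;
  pcap : Project -> nat;
  lcap : Lecturer -> nat;
  srank_inj : forall s p q, p \in acc s -> q \in acc s ->
                srank s p = srank s q -> p = q;
  lrank_inj : forall l s t,
    [exists p, (offer p == l) && (p \in acc s)] ->
    [exists p, (offer p == l) && (p \in acc t)] ->
    lrank l s = lrank l t -> s = t;
  offers_nonempty : forall l, [exists p, offer p == l];
  pcap_pos : forall p, 0 < pcap p;
  lcap_ge : forall l p, offer p = l -> pcap p <= lcap l;
  lcap_le : forall l, lcap l <= \sum_(p | offer p == l) pcap p
}.

Section Defs.
Variables (Student Project Lecturer : finType).
Variable I : SPAS Student Project Lecturer.

Definition projs_of (l : Lecturer) : {set Project} :=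
  [set p | offer I p == l].

(* students on l's list: those finding some project of l acceptable *)
Definition llist (l : Lecturer) : {set Student} :=
  [set s | [exists p, (offer I p == l) && (p \in acc I s)]].

Definition acceptable (s : Student) (p : Project) : Prop :=
  p \in acc I s /\ s \in llist (offer I p).

Definition sprefers (s : Student) (p q : Project) : Prop :=
  srank I s p < srank I s q.

Definition lprefers (l : Lecturer) (s t : Student) : Prop :=
  lrank I l s < lrank I l t.

Definition assignment := Student -> option Project.

Definition Mp (M : assignment) (p : Project) : {set Student} :=
  [set s | M s == Some p].

Definition Ml (M : assignment) (l : Lecturer) : {set Student} :=
  [set s | [exists p, (M s == Some p) && (offer I p == l)]].

Definition is_matching (M : assignment) : Prop :=
  (forall s p, M s = Some p -> acceptable s p) /\
  (forall p, #|Mp M p| <= pcap I p) /\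
  (forall l, #|Ml M l| <= lcap I l).

Definition p_under (M : assignment) p := #|Mp M p| < pcap I p.
Definition p_full (M : assignment) p := #|Mp M p| = pcap I p.
Definition l_under (M : assignment) l := #|Ml M l| < lcap I l.
Definition l_full (M : assignment) l := #|Ml M l| = lcap I l.

Definition prefers_to_worst (l : Lecturer) (s : Student) (S : {set Student}) : Prop :=
  exists w, [/\ w \in S, (forall t, t \in S -> lrank I l t <= lrank I l w)
              & lprefers l s w].

Definition blocks (M : assignment) (s : Student) (p : Project) : Prop :=
  let l := offer I p in
  [/\ acceptable s p, M s <> Some p,
      (M s = None \/ exists q, M s = Some q /\ sprefers s p q) &
      [\/ (p_under M p /\ l_under M l),
          [/\ p_under M p, l_full M l & s \in Ml M l],
          [/\ p_under M p, l_full M l & prefers_to_worst l s (Ml M l)] |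
          (p_full M p /\ prefers_to_worst l s (Mp M p))]].

Definition stable (M : assignment) : Prop :=
  is_matching M /\ forall s p, ~ blocks M s p.

End Defs.

From mathcomp Require Import all_boot.
Set Implicit Arguments. Unset Strict Implicit. Unset Printing Implicit Defensive.

(* If s leaves p in M for a worse project p' of the same lecturer l in M',
   stability of M' forces p to be full in M' with students that l ranks above
   s.  As s is in M(p) but not in M'(p), one of them, t, is not in M(p).
   Either t is not in M(l) and we are done, or t moved inside l from M(t) to p;
   then stability of M, with s in M(p) ranked below t, forces t to prefer M(t)
   to p.  So t is in the situation of s, but ranked strictly higher by l:
   conclude by induction on l's rank. *)

Lemma exists_setD_of_card_leq (T : finType) (A B : {set T}) x :
  #|A| <= #|B| -> x \in A -> x \notin B -> exists2 y, y \in B & y \notin A.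
Proof.
move=> leAB xA xNB; case: (boolP (B \subset A)) => [subBA | /subsetPn[y]]; last by exists y.
have /subset_leq_card : B \subset A :\ x by rewrite subsetD1 subBA.
by rewrite leqNgt (leq_trans _ leAB) // (cardsD1 x A) xA.
Qed.

Section Stability.
Variables (Student Project Lecturer : finType) (I : SPAS Student Project Lecturer).
Implicit Types (M : assignment Student Project) (s t : Student) (p q : Project).

Lemma in_Ml M s q : M s = Some q -> s \in Ml I M (offer I q).
Proof. by move=> Msq; rewrite inE; apply/existsP; exists q; rewrite Msq !eqxx. Qed.

Lemma acceptable_llist s p : acceptable I s p -> s \in llist I (offer I p).
Proof. by case. Qed.

Lemma lprefers_of_leq l s t : s \in llist I l -> t \in llist I l -> s != t ->
  lrank I l s <= lrank I l t -> lprefers I l s t.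
Proof.
rewrite !inE => sl tl neq_st le_st; rewrite /lprefers ltn_neqAle le_st andbT.
by apply: contra neq_st => /eqP/(lrank_inj sl tl)->.
Qed.

Lemma not_prefers_to_worst l t (S : {set Student}) :
  ~ prefers_to_worst I l t S -> {in S, forall x, lrank I l x <= lrank I l t}.
Proof.
move=> notw x xS; case: (arg_maxnP (lrank I l) xS) => w wS wmax.
rewrite leqNgt; apply/negP => lt_tw; apply: notw; exists w; split=> //.
exact: leq_trans lt_tw (wmax _ xS).
Qed.

Lemma stable_upgrade_within_lecturer M t p q :
  stable I M -> M t = Some q -> acceptable I t p -> q <> p ->
  offer I q = offer I p -> sprefers I t p q ->
  p_full I M p /\ {in Mp M p, forall x, lrank I (offer I p) x <= lrank I (offer I p) t}.
Proof.
move=> [[_ [capp capl]] noblock] Mtq acc_tp neq_qp offer_qp pref_pq.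
have Mt_neq : M t <> Some p by rewrite Mtq => -[].
have Mt_worse : M t = None \/ exists q, M t = Some q /\ sprefers I t p q.
  by right; exists q.
move: (capp p); rewrite leq_eqVlt => /orP[/eqP full | under].
  split=> //; apply: not_prefers_to_worst => worst.
  by apply: (noblock t p); split=> //; apply: Or44.
have tl : t \in Ml I M (offer I p) by rewrite -offer_qp in_Ml.
exfalso; apply: (noblock t p); split=> //.
by move: (capl (offer I p)); rewrite leq_eqVlt => /orP[/eqP ?|?]; [apply: Or42 | apply: Or41].
Qed.

Lemma exists_better_newcomer_in_project M (M' : assignment Student Project) s p p' :
  is_matching I M -> stable I M' ->
  M s = Some p -> M' s = Some p' -> p <> p' -> offer I p = offer I p' ->
  sprefers I s p p' ->
  exists t, [/\ M' t = Some p, M t <> Some p & lprefers I (offer I p) t s].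
Proof.
move=> matching_M stable_M' Msp M's neq_pp' offer_pp' pref_pp'.
have acc_sp := matching_M.1 _ _ Msp.
have [full better] :=
  stable_upgrade_within_lecturer stable_M' M's acc_sp (nesym neq_pp') (esym offer_pp') pref_pp'.
have s_in : s \in Mp M p by rewrite inE Msp.
have s_out : s \notin Mp M' p by rewrite inE M's; apply/eqP => -[/esym].
have [|t tM' tNM] := exists_setD_of_card_leq _ s_in s_out.
  by rewrite full; apply: matching_M.2.1.
have M'tp : M' t = Some p by move: tM'; rewrite inE => /eqP.
exists t; split=> //; first by move=> Mtp; rewrite inE Mtp eqxx in tNM.
apply: lprefers_of_leq; last exact: better.
- exact/acceptable_llist/(stable_M'.1.1 _ _ M'tp).
- exact: acceptable_llist.
- by apply: contraNneq s_out => <-.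
Qed.

Variables M M' : assignment Student Project.
Hypotheses (stable_M : stable I M) (stable_M' : stable I M').

Lemma stable_keeps_preferred_project s t p q :
  M' t = Some p -> M t = Some q -> q <> p -> offer I q = offer I p ->
  M s = Some p -> lprefers I (offer I p) t s -> sprefers I t q p.
Proof.
move=> M'tp Mtq neq_qp offer_qp Msp pref_ts.
have acc_tp := stable_M'.1.1 _ _ M'tp; have acc_tq := stable_M.1.1 _ _ Mtq.
case: (ltngtP (srank I t q) (srank I t p)) => // [pref_pq | eq_qp].
  have [_ better] := stable_upgrade_within_lecturer stable_M Mtq acc_tp neq_qp offer_qp pref_pq.
  by have := better s; rewrite inE Msp eqxx leqNgt pref_ts => /(_ isT).
by case: neq_qp; apply: srank_inj eq_qp; [case: acc_tq | case: acc_tp].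
Qed.

Lemma exists_better_newcomer_in_lecturer n s p p' :
  lrank I (offer I p) s = n ->
  M s = Some p -> M' s = Some p' -> p <> p' -> offer I p = offer I p' ->
  sprefers I s p p' ->
  exists sr, [/\ sr \in Ml I M' (offer I p), sr \notin Ml I M (offer I p)
                & lprefers I (offer I p) sr s].
Proof.
elim/ltn_ind: n s p p' => n IH s p p' rank_s Msp M's neq_pp' offer_pp' pref_pp'.
have [t [M'tp Mt_neq pref_ts]] :=
  exists_better_newcomer_in_project stable_M.1 stable_M' Msp M's neq_pp' offer_pp' pref_pp'.
case: (boolP (t \in Ml I M (offer I p))) => [|t_new]; last first.
  by exists t; split=> //; apply: in_Ml.
rewrite inE => /existsP[q /andP[/eqP Mtq /eqP offer_qp]].
have neq_qp : q <> p by move=> eq_qp; apply: Mt_neq; rewrite Mtq eq_qp.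
have pref_qp := stable_keeps_preferred_project M'tp Mtq neq_qp offer_qp Msp pref_ts.
have rank_t : lrank I (offer I q) t < n by rewrite offer_qp -rank_s.
have [sr []] := IH _ rank_t t q p erefl Mtq M'tp neq_qp offer_qp pref_qp.
rewrite offer_qp => sr_new sr_old pref_sr_t.
by exists sr; split=> //; apply: ltn_trans pref_ts.
Qed.

End Stability.

Theorem lemma1 (Student Project Lecturer : finType)
  (I : SPAS Student Project Lecturer) (M M' : assignment Student Project)
  (s : Student) (p p' : Project) :
  stable I M -> stable I M' ->
  M s = Some p -> M' s = Some p' -> p <> p' ->
  offer I p = offer I p' ->
  sprefers I s p p' ->
  (exists sr, [/\ sr \in Ml I M' (offer I p), sr \notin Ml I M (offer I p)
                & lprefers I (offer I p) sr s])
  /\ Ml I M (offer I p) <> Ml I M' (offer I p).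
Proof.
move=> stable_M stable_M' Msp M's neq_pp' offer_pp' pref_pp'.
have [sr [sr_new sr_old pref_sr]] :=
  exists_better_newcomer_in_lecturer stable_M stable_M' erefl Msp M's neq_pp' offer_pp' pref_pp'.
split; first by exists sr.
by move=> eq_Ml; rewrite eq_Ml sr_new in sr_old.
Qed.
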